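(* Let $n\ge2$ and let $f:\mathbb R^n\to\mathbb R^n$ be a continuous injective map such that $\overline{f(A^\circ)}=\big(\overline{f(A)}\big)^\circ$ for every $A\in\mathcal K_0^n$. Then $f$ is an orthogonal linear map.
   Context: $\mathcal K_0^n$: closed convex subsets of $\mathbb R^n$ containing $0$. Polar: $A^\circ=\{x:\sup_{a\in A}\langle a,x\rangle\le1\}$. $f(A)=\{f(a):a\in A\}$ and the bar denotes topological closure in $\mathbb R^n$. *)

From HB Require Import structures.
From mathcomp Require Import all_boot all_order all_algebra.
From mathcomp Require Import all_classical all_reals all_analysis.
Set Implicit Arguments. Unset Strict Implicit. Unset Printing Implicit Defensive.
Import Order.TTheory GRing.Theory Num.Theory.
Import numFieldNormedType.Exports.
Local Open Scope classical_set_scope.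
Local Open Scope ring_scope.

(* R^n is modelled as row vectors 'rV[R]_n with the standard inner product. *)
Definition dotv (R : realType) (n : nat) (u v : 'rV[R]_n) : R :=
  \sum_(i < n) u ord0 i * v ord0 i.

Definition polar (R : realType) (n : nat) (A : set 'rV[R]_n) : set 'rV[R]_n :=
  [set x | forall a, A a -> dotv a x <= 1].

Definition convex_set_rV (R : realType) (n : nat) (A : set 'rV[R]_n) : Prop :=
  forall x y (t : R), A x -> A y -> 0 <= t -> t <= 1 ->
    A ((1 - t) *: x + t *: y).

Definition K0 (R : realType) (n : nat) (A : set 'rV[R]_n) : Prop :=
  closed A /\ convex_set_rV A /\ A 0.

Definition orthogonal_linear (R : realType) (n : nat)
  (f : 'rV[R]_n -> 'rV[R]_n) : Prop :=
  exists M : 'M[R]_n, M *m M^T = 1%:M /\ forall x, f x = x *m M.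

From HB Require Import structures.
From mathcomp Require Import all_boot all_order all_algebra.
From mathcomp Require Import all_classical all_reals all_analysis.
From mathcomp Require Import ring lra.
Import Order.TTheory GRing.Theory Num.Theory.
Import numFieldNormedType.Exports.
Local Open Scope classical_set_scope.
Local Open Scope ring_scope.

(* Applied to A = R^n and A = {0}, the hypothesis gives f 0 = 0 and a dense
   image; applied to the half-space {x | <b, x> <= 1}, whose polar is the
   segment [0, b], it shows that <b, a> <= 1 implies <f b, f a> <= 1.  Polars
   of small balls are compact, which makes f proper, hence a closed map and a
   homeomorphism of R^n.  The closures then disappear: f maps [0, b] onto
   [0, f b] and <b, a> <= 1 iff <f b, f a> <= 1.  Hence f maps rays onto rays
   and preserves both orthogonality and the relation <a, x> = 1, so the images
   f e_k of the standard basis are orthonormal and f x = sum_k h_k (x_k) f e_k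
   with h_k t = <f (t e_k), f e_k>.  Testing <e_i + t e_j, a e_i + b e_j> =
   a + t b = 1 yields a pair of functional equations for h_i and h_j whose
   only solution is the identity. *)

Section InnerProduct.
Context {R : realType} {n : nat}.
Implicit Types (u v w : 'rV[R]_n) (k : R).

Lemma dotvC u v : dotv u v = dotv v u.
Proof. by apply: eq_bigr => i _; rewrite mulrC. Qed.

Lemma dotvDr u v w : dotv u (v + w) = dotv u v + dotv u w.
Proof. by rewrite /dotv -big_split; apply: eq_bigr => i _; rewrite mxE mulrDr. Qed.

Lemma dotvZr u v k : dotv u (k *: v) = k * dotv u v.
Proof. by rewrite /dotv mulr_sumr; apply: eq_bigr => i _; rewrite mxE mulrCA. Qed.

Lemma dotvNr u v : dotv u (- v) = - dotv u v.
Proof. by rewrite -scaleN1r dotvZr mulN1r. Qed.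

Lemma dotv0r u : dotv u 0 = 0.
Proof. by rewrite -(scale0r 0) dotvZr mul0r. Qed.

Lemma dotvDl u v w : dotv (v + w) u = dotv v u + dotv w u.
Proof. by rewrite dotvC dotvDr !(dotvC u). Qed.

Lemma dotvZl u v k : dotv (k *: v) u = k * dotv v u.
Proof. by rewrite dotvC dotvZr dotvC. Qed.

Lemma dotvNl u v : dotv (- v) u = - dotv v u.
Proof. by rewrite dotvC dotvNr dotvC. Qed.

Lemma dotv0l u : dotv 0 u = 0.
Proof. by rewrite dotvC dotv0r. Qed.

Lemma dotv_sumr u I (r : seq I) (P : pred I) (F : I -> 'rV[R]_n) :
  dotv u (\sum_(i <- r | P i) F i) = \sum_(i <- r | P i) dotv u (F i).
Proof. exact: (big_morph _ (dotvDr u) (dotv0r u)). Qed.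

Lemma dotv_delta i u : dotv (delta_mx ord0 i) u = u ord0 i.
Proof.
rewrite /dotv (bigD1 i) //= big1 ?addr0; first by rewrite mxE !eqxx mul1r.
by move=> j ji; rewrite mxE eqxx /= (negbTE ji) mul0r.
Qed.

Lemma dotv_gt0 u : u != 0 -> 0 < dotv u u.
Proof.
move=> u0; rewrite lt_def sumr_ge0 ?andbT => [|i _]; last by rewrite -expr2 sqr_ge0.
apply: contra u0; rewrite psumr_eq0 => [/allP u0|i _]; last by rewrite -expr2 sqr_ge0.
apply/eqP/rowP => i; rewrite mxE.
by have := u0 i (mem_index_enum i); rewrite mulf_eq0 orbb => /eqP.
Qed.

Lemma coord_le_norm u i : `|u ord0 i| <= `|u|.
Proof.
have /mapP[j _ ->] : `|u ord0 i| \in [seq `|u x.1 x.2| | x : 'I_1 * 'I_n].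
  by apply/mapP; exists (ord0, i) => //=; rewrite mem_enum.
by rewrite [leRHS]/Num.Def.normr /= mx_normrE; apply/bigmax_geP; right; exists j.
Qed.

Lemma norm_le_coord u (c : R) : 0 <= c -> (forall i, `|u ord0 i| <= c) -> `|u| <= c.
Proof.
move=> c0 uc; rewrite [leLHS]/Num.Def.normr /= mx_normrE.
by apply/bigmax_leP; split => // -[i j] _ /=; rewrite (ord1 i).
Qed.

Lemma dotv_le u v : `|dotv u v| <= n%:R * (`|u| * `|v|).
Proof.
have -> : n%:R * (`|u| * `|v|) = \sum_(i < n) (`|u| * `|v|).
  by rewrite sumr_const card_ord mulr_natl.
apply: le_trans (ler_norm_sum _ _ _) _.
by apply: ler_sum => i _; rewrite normrM ler_pM ?coord_le_norm.
Qed.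

Lemma continuous_dotv u : continuous (dotv u).
Proof.
move=> x; apply/(@cvgrPdist_lt _ _ _ (nbhs x) _ (dotv u)) => e e0.
have c0 : 0 < n%:R * `|u| + 1 by rewrite ltr_wpDl // mulr_ge0.
rewrite -(@nbhs_nbhs_norm R 'rV[R]_n); exists (e / (n%:R * `|u| + 1)).
  by rewrite /= divr_gt0.
move=> y /= xy; rewrite -dotvNr -dotvDr; apply: le_lt_trans (dotv_le _ _) _.
rewrite mulrA (@le_lt_trans _ _ ((n%:R * `|u| + 1) * `|x - y|)) //.
  by rewrite ler_wpM2r // lerDl.
by rewrite mulrC -ltr_pdivlMr.
Qed.

End InnerProduct.

Lemma closure_set1 (K : numFieldType) (V : normedModType K) (x : V) :
  closure [set x] = [set x].
Proof.
by apply/esym/closure_id/accessible_closed_set1/hausdorff_accessible/norm_hausdorff.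
Qed.

Section Polar.
Context {R : realType} {n : nat}.
Implicit Types (S T : set 'rV[R]_n) (b x : 'rV[R]_n).

Definition halfspace b := [set x | dotv b x <= 1].
Definition segment b := [set x | exists t, 0 <= t <= 1 /\ x = t *: b].
Definition cball (r : R) := [set x : 'rV[R]_n | `|x| <= r].

Lemma closed_halfspace b : closed (halfspace b).
Proof.
apply: (@preimage_closed _ _ (dotv b) [set r | r <= 1]) => [x _|].
  exact: continuous_dotv.
exact: closed_le.
Qed.

Lemma polarE S : polar S = \bigcap_(a in S) halfspace a.
Proof. by rewrite predeqE => x; split => Sx a /Sx. Qed.

Lemma polarS S T : S `<=` T -> polar T `<=` polar S.
Proof. by move=> ST x Tx a /ST /Tx. Qed.

Lemma sub_bipolar S : S `<=` polar (polar S).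
Proof. by move=> a Sa x Sx; rewrite dotvC; exact: Sx. Qed.

Lemma K0_polar S : K0 (polar S).
Proof.
split; first by rewrite polarE; apply: closed_bigI => a _; exact: closed_halfspace.
split=> [x y t Sx Sy t0 t1 a Sa|a _]; last by rewrite dotv0r.
have := Sx a Sa; have := Sy a Sa; rewrite dotvDr !dotvZr => ay ax.
have : (1 - t) * dotv a x <= 1 - t by rewrite ler_piMr // subr_ge0.
have : t * dotv a y <= t by rewrite ler_piMr.
lra.
Qed.

Lemma polar_closure S : polar (closure S) = polar S.
Proof.
apply/seteqP; split; first by apply: polarS; exact: subset_closure.
move=> x Sx a; rewrite closureE => /(smallest_sub (closed_halfspace x)).
by rewrite /halfspace /= dotvC; apply => b /Sx; rewrite dotvC.
Qed.

Lemma polar_set1 b : polar [set b] = halfspace b.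
Proof. by rewrite predeqE => x; split => [/(_ b erefl)|bx a ->]. Qed.

Lemma halfspace0 : halfspace 0 = setT.
Proof. by rewrite predeqE => x; rewrite /halfspace /= dotv0l ler01. Qed.

Lemma polar_segment b : polar (segment b) = halfspace b.
Proof.
rewrite predeqE => x; split => [bx|bx a [t [/andP[t0 t1] ->]]].
  by apply: bx; exists 1; rewrite scale1r ler01 lexx.
rewrite dotvZl; have [bx0|bx0] := leP (dotv b x) 0.
  by rewrite (le_trans (mulr_ge0_le0 t0 bx0)).
by rewrite (le_trans _ bx) // ler_piMl // ltW.
Qed.

Lemma perp_proj b x : (forall w, dotv b w = 0 -> dotv w x <= 1) ->
  x = (dotv b x / dotv b b) *: b.
Proof.
move=> bx; set t := _ / _; set w := x - t *: b.
have bw : dotv b w = 0.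
  have [->|b0] := eqVneq b 0; first by rewrite dotv0l.
  by rewrite dotvDr dotvNr dotvZr mulfVK ?subrr // gt_eqF // dotv_gt0.
have wx : dotv w x = dotv w w.
  by rewrite -{1}(subrK (t *: b) x) -/w dotvDr dotvZr (dotvC w b) bw mulr0 addr0.
apply/eqP; rewrite -subr_eq0 -/w; apply: contraT => w0.
have := bx (2 / dotv w w *: w); rewrite dotvZr bw mulr0 dotvZl wx => /(_ erefl).
by rewrite mulfVK ?gt_eqF ?dotv_gt0 // lern1.
Qed.

Lemma polar_halfspace b : polar (halfspace b) = segment b.
Proof.
apply/seteqP; split => [x bx|]; last by rewrite -polar_segment; exact: sub_bipolar.
rewrite (perp_proj b x) => [|w bw]; last by apply: bx; rewrite /halfspace /= bw ler01.
exists (dotv b x / dotv b b); split => //.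
have [->|b0] := eqVneq b 0; first by rewrite dotv0l mul0r lexx ler01.
have bb0 : 0 < dotv b b by rewrite dotv_gt0.
have ut u : u <= 1 -> u * (dotv b x / dotv b b) <= 1.
  move=> u1; have := bx (u / dotv b b *: b).
  rewrite /halfspace /= !dotvZl dotvZr mulfVK ?gt_eqF // => /(_ u1).
  by rewrite -mulrA [_^-1 * _]mulrC.
apply/andP; split; last by rewrite -[leLHS]mul1r ut.
rewrite leNgt; apply/negP => t0.
suff /ut : 2 / (dotv b x / dotv b b) <= 1 by rewrite mulfVK ?lt_eqF // lern1.
by apply: le_trans ler01; rewrite ltW // pmulr_rlt0 // invr_lt0.
Qed.

Lemma polarT : polar [set: 'rV[R]_n] = [set 0].
Proof.
rewrite predeqE => x; split => [Tx|->]; last by case: (K0_polar setT) => _ [].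
by rewrite (perp_proj 0 x) ?scaler0 // => w _; exact: Tx.
Qed.

Lemma K0_halfspace b : K0 (halfspace b).
Proof. by rewrite -polar_set1; exact: K0_polar. Qed.

Lemma K0_segment b : K0 (segment b).
Proof. by rewrite -polar_halfspace; exact: K0_polar. Qed.

Lemma closed_cball r : closed (cball r).
Proof.
apply: (@preimage_closed _ R (fun x : 'rV[R]_n => `|x|) [set s | s <= r]) => [x _|].
  exact: norm_continuous.
exact: closed_le.
Qed.

Lemma compact_cball r : compact (cball r).
Proof.
apply: bounded_closed_compact (closed_cball r).
by exists r; split => [|M rM x /le_trans]; [exact: num_real|apply; exact: ltW].
Qed.

Lemma K0_cball r : 0 <= r -> K0 (cball r).
Proof.
split; first exact: closed_cball.
split=> [x y t xr yr t0 t1|]; last by rewrite /cball /= normr0.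
rewrite /cball /= (le_trans (ler_normD _ _)) // !normrZ ger0_norm ?subr_ge0 //.
by rewrite ger0_norm //; move: xr yr; rewrite /cball /=; nra.
Qed.

Lemma polar_cball r : 0 < r -> polar (cball r) `<=` cball r^-1.
Proof.
move=> r0 x rx; apply: norm_le_coord => [|i]; first by rewrite invr_ge0 ltW.
have : cball r ((r * Num.sg (x ord0 i)) *: delta_mx ord0 i).
  rewrite /cball /= normrZ normrM normr_sg gtr0_norm // -[leRHS]mulr1.
  apply: ler_pM; rewrite ?mulr_ge0 ?(ltW r0) //.
    by rewrite ler_piMr ?(ltW r0) // lern1 leq_b1.
  by apply: norm_le_coord => // j; rewrite mxE; case: (_ && _); rewrite ?normr1 ?normr0.
move/rx; rewrite dotvZl dotv_delta -mulrA -normrEsg.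
by rewrite -[r^-1]mul1r ler_pdivlMr // mulrC.
Qed.

Lemma segment0 : segment 0 = [set 0].
Proof.
rewrite predeqE => x; split => [[t [_ ->]]|->]; first by rewrite scaler0.
by exists 0; rewrite scaler0 lexx ler01.
Qed.

Lemma segment_scale_inv b t : 1 <= t -> segment (t *: b) b.
Proof.
move=> t1; have t0 : 0 < t by rewrite (lt_le_trans ltr01).
by exists t^-1; rewrite scalerA mulVf ?gt_eqF // scale1r invr_ge0 invf_le1 // t1 ltW.
Qed.

Lemma segment_ray x y : y != 0 -> segment x y -> exists2 s, 0 <= s & x = s *: y.
Proof.
move=> y0 [t [/andP[t0 _] yE]]; have tn0 : t != 0.
  by apply: contraNneq y0 => t0'; rewrite yE t0' scale0r.
by exists t^-1; rewrite ?invr_ge0 // yE scalerA mulVf // scale1r.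
Qed.

End Polar.

Section CrossEquation.
Context {R : realType}.
Implicit Types phi psi : R -> R.

(* Nonnegative reals are squares, so phi is monotone; it fixes the dense
   subfield of rationals. *)
Lemma ring_endo_id phi : phi 1 = 1 -> {morph phi : x y / x + y} ->
  {morph phi : x y / x * y} -> phi =1 id.
Proof.
move=> phi1 phiD phiM.
have phi0 : phi 0 = 0 by apply: (addrI (phi 0)); rewrite -phiD !addr0.
have phiN x : phi (- x) = - phi x by apply/eqP; rewrite -addr_eq0 -phiD addNr phi0.
have phi_ge0 x : 0 <= x -> 0 <= phi x.
  by move=> x0; rewrite -(sqr_sqrtr x0) expr2 phiM -expr2 sqr_ge0.
have phi_le x y : x <= y -> phi x <= phi y.
  by move=> xy; rewrite -(subrK x y) phiD lerDr phi_ge0 // subr_ge0.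
have phi_nat k : phi k%:R = k%:R.
  by elim: k => [|k IH]; rewrite ?phi0 // -addn1 natrD phiD IH phi1.
have phi_int z : phi z%:~R = z%:~R.
  by case: z => k; rewrite ?NegzE -?nmulrn ?phiN phi_nat.
have phi_rat q : phi (ratr q) = ratr q.
  have d0 : (denq q)%:~R != 0 :> R by rewrite intr_eq0 denq_neq0.
  by apply: (mulIf d0); rewrite -{1}phi_int -phiM /ratr mulfVK // phi_int.
move=> x; apply/eqP; rewrite eq_le !leNgt; apply/andP; split; apply/negP => lt_x.
  have [q] := rat_in_itvoo lt_x; rewrite in_itv /= => /andP[xq qp].
  by have := phi_le _ _ (ltW xq); rewrite phi_rat leNgt qp.
have [q] := rat_in_itvoo lt_x; rewrite in_itv /= => /andP[pq qx].
by have := phi_le _ _ (ltW qx); rewrite phi_rat leNgt pq.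
Qed.

Definition cross_eq phi psi :=
  forall a b t, a + t * b = 1 -> phi a + psi t * psi b = 1.

Definition cross_pair phi psi :=
  [/\ phi 1 = 1, psi 1 = 1, cross_eq phi psi & cross_eq psi phi].

Lemma cross_pairC {phi psi} : cross_pair phi psi -> cross_pair psi phi.
Proof. by case. Qed.

Lemma cross_eq_sub {phi psi} : psi 1 = 1 -> cross_eq phi psi ->
  forall b, phi (1 - b) = 1 - psi b.
Proof.
by move=> psi1 E b; have := E (1 - b) b 1; rewrite psi1 mul1r subrK => /(_ erefl); lra.
Qed.

Lemma cross_eq_mul {phi psi} : psi 1 = 1 -> cross_eq phi psi ->
  {morph psi : x y / x * y}.
Proof.
move=> psi1 E x y; have := E (1 - x * y) y x.
rewrite subrK (cross_eq_sub psi1 E) => /(_ erefl).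
by set u := psi (x * y); set v := psi x * psi y; lra.
Qed.

Lemma cross_pairN1 {phi psi} : cross_pair phi psi -> psi (-1) = -1.
Proof.
case=> phi1 psi1 Epp Eqp.
have sq : psi (-1) * psi (-1) = 1 by rewrite -(cross_eq_mul psi1 Epp) mulrNN mul1r.
have : phi 2 * phi 2^-1 = 1 by rewrite -(cross_eq_mul phi1 Eqp) divff ?pnatr_eq0.
have two : (2 : R) = 1 - -1 by rewrite opprK.
rewrite [X in phi X * _]two (cross_eq_sub psi1 Epp).
have /eqP : (psi (-1) - 1) * (psi (-1) + 1) = 0.
  by rewrite -subr_sqr expr2 sq expr1n subrr.
rewrite mulf_eq0 subr_eq0 addr_eq0 => /orP[/eqP ->|/eqP //].
by rewrite subrr mul0r => /eqP; rewrite eq_sym oner_eq0.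
Qed.

Lemma cross_pair_shift {phi psi} x : cross_pair phi psi -> psi x = 1 + phi (x - 1).
Proof.
move=> P; have [phi1 _ _ Eqp] := P.
have := cross_eq_sub phi1 Eqp (1 - x); rewrite opprB addrC subrK => ->.
have -> : 1 - x = -1 * (x - 1) by rewrite mulN1r opprB.
by rewrite (cross_eq_mul phi1 Eqp) (cross_pairN1 (cross_pairC P)) mulN1r opprK.
Qed.

(* Both maps are multiplicative and psi x = 1 + phi (x - 1); this yields
   phi (z + 1) = phi z + 1, and then additivity. *)
Lemma cross_pair_id {phi psi} : cross_pair phi psi -> phi =1 id.
Proof.
move=> P; have [phi1 psi1 Epp Eqp] := P.
have phiM := cross_eq_mul phi1 Eqp; have psiM := cross_eq_mul psi1 Epp.
have phi_shift x := cross_pair_shift x (cross_pairC P).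
have psi_shift x := cross_pair_shift x P.
have two1 : (2 : R) - 1 = 1 by ring.
have phi2 : phi 2 = 2 by rewrite phi_shift two1 psi1.
have phi0 : phi 0 = 0 by rewrite phi_shift sub0r (cross_pairN1 P) addrN.
have phiS z : phi (z + 1) = phi z + 1.
  have := psiM 2 ((z + 2) / 2); rewrite !psi_shift two1 phi1.
  rewrite (_ : 2 * ((z + 2) / 2) - 1 = z + 1); last by field.
  rewrite (_ : (z + 2) / 2 - 1 = z / 2); last by field.
  have hz : phi z = 2 * phi (z / 2).
    by rewrite -[X in X * phi _]phi2 -phiM mulrC divfK // pnatr_eq0.
  by move=> h; lra.
have phiD : {morph phi : x y / x + y}.
  move=> x y; have [->|y0] := eqVneq y 0; first by rewrite addr0 phi0 addr0.
  have -> : x + y = y * (x / y + 1) by field.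
  by rewrite phiM phiS mulrDr -phiM mulr1 mulrC divfK.
exact: ring_endo_id phi1 phiD phiM.
Qed.

End CrossEquation.

Section Orthonormal.
Context {R : realType} {n : nat} (u : 'I_n -> 'rV[R]_n).
Hypothesis u_orthonormal : forall j k, dotv (u j) (u k) = (j == k)%:R.

Lemma orthonormal_mx : (\matrix_k u k) *m (\matrix_k u k)^T = 1%:M.
Proof.
apply/matrixP => j k; rewrite !mxE -u_orthonormal.
by apply: eq_bigr => l _; rewrite !mxE.
Qed.

Lemma orthonormal_expand y : y = \sum_k dotv y (u k) *: u k.
Proof.
rewrite -{1}(mulmx1 y) -(mulmx1C orthonormal_mx) mulmxA mulmx_sum_row.
apply: eq_bigr => k _; rewrite rowK; congr (_ *: _).
by rewrite mxE; apply: eq_bigr => l _; rewrite !mxE.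
Qed.

End Orthonormal.

Section PolarPreservingMap.
Context {R : realType} {n : nat} (f : 'rV[R]_n -> 'rV[R]_n).
Hypothesis f_cont : continuous f.
Hypothesis f_inj : injective f.
Hypothesis f_polar : forall A, K0 A ->
  closure (f @` polar A) = polar (closure (f @` A)).

Lemma f0 : f 0 = 0.
Proof.
have := f_polar _ (K0_polar [set 0 : 'rV[R]_n]).
rewrite polar_set1 halfspace0 polarT image_set1 closure_set1 => E.
by have [_ [_]] := K0_polar (closure (range f)); rewrite -E => /esym.
Qed.

Lemma closure_range : closure (range f) = setT.
Proof.
have := f_polar _ (K0_polar [set: 'rV[R]_n]).
rewrite polarT polar_set1 halfspace0 image_set1 f0 closure_set1.
by rewrite polar_set1 halfspace0.
Qed.

Lemma dotv_f_le1 a b : dotv b a <= 1 -> dotv (f b) (f a) <= 1.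
Proof.
move=> ab; rewrite dotvC.
have : closure (f @` polar (halfspace b)) (f b).
  apply: subset_closure; exists b => //; rewrite polar_halfspace.
  by exists 1; rewrite scale1r lexx ler01.
rewrite (f_polar _ (K0_halfspace b)) => /(_ (f a)) -> //.
by apply: subset_closure; exists a.
Qed.

Lemma image_polar_compact A : K0 A -> compact (polar A) ->
  f @` polar A = polar (f @` A).
Proof.
move=> KA cA; rewrite -[polar (f @` A)]polar_closure -f_polar //; apply/closure_id.
apply: compact_closed (@norm_hausdorff _ _) _.
exact: continuous_compact (continuous_subspaceT f_cont) cA.
Qed.

(* f maps a small ball Q into a small ball, so f z lies in the polar of f @` Q
   whenever |f z| <= M; as polar Q is compact, this pulls back to z \in polar Q. *)
Lemma f_proper M : 0 <= M -> exists r, forall z, `|f z| <= M -> `|z| <= r.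
Proof.
move=> M0; have c0 : 0 < n%:R * M + 1 by rewrite ltr_wpDl // mulr_ge0.
have /nbhs_norm0P[d /= d0 fd] :
    \forall x \near (0 : 'rV[R]_n), `|f x| < (n%:R * M + 1)^-1.
  have := f_cont 0; rewrite /continuous_at f0 => /cvgr0_norm_lt; apply.
  by rewrite invr_gt0.
have d20 : 0 < d / 2 by rewrite divr_gt0.
pose Q : set 'rV[R]_n := cball (d / 2).
have cQ : compact (polar Q).
  have [clQ _] := K0_polar Q.
  exact: subclosed_compact clQ (compact_cball _) (polar_cball _ d20).
exists (d / 2)^-1 => z fzM; apply: (polar_cball _ d20).
have : polar (f @` Q) (f z).
  move=> _ [x xd <-]; apply: le_trans (ler_norm _) _; apply: le_trans (dotv_le _ _) _.
  have nfz : n%:R * `|f z| <= n%:R * M + 1 by rewrite ler_wpDr // ler_wpM2l.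
  rewrite mulrCA mulrC; apply: le_trans (ler_wpM2r (normr_ge0 _) nfz) _.
  rewrite -ler_pdivlMl // mulr1; apply/ltW/fd => /=.
  by rewrite (le_lt_trans xd) // ltr_pdivrMr // ltr_pMr // ltr1n.
have KQ : K0 Q by apply: K0_cball; exact: ltW.
by rewrite -image_polar_compact // => -[y yd /f_inj <-].
Qed.

Lemma closed_image C : closed C -> closed (f @` C).
Proof.
move=> cC; apply/closure_id/seteqP; split=> [|y cy]; first exact: subset_closure.
have [r fr] := f_proper _ (addr_ge0 (normr_ge0 y) ler01).
have cD : closed (f @` (C `&` cball r)).
  apply: compact_closed (@norm_hausdorff _ _) _.
  apply: continuous_compact (continuous_subspaceT f_cont) _.
  apply: subclosed_compact (closedI cC (closed_cball r)) (compact_cball r) _.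
  exact: subIsetr.
suff /cD[x [Cx _] <-] : closure (f @` (C `&` cball r)) y by exists x.
move=> B /(filterI (nbhs_ball_norm y 1%:pos)) /cy[_ [[x Cx <-] [yfx Bfx]]].
exists (f x); split => //; exists x => //; split => //; apply: fr.
rewrite /ball_ /= in yfx.
by rewrite -[f x](subrK y) addrC (le_trans (ler_normD _ _)) // lerD // distrC ltW.
Qed.

Lemma f_surj y : exists x, f x = y.
Proof.
have /closure_id fE := closed_image _ closedT.
have : range f y by rewrite fE closure_range.
by case=> x _ <-; exists x.
Qed.

Lemma image_polar A : K0 A -> f @` polar A = polar (f @` A).
Proof.
case=> cA KA; have /closure_id -> := closed_image _ (K0_polar A).1.
by rewrite f_polar //; have /closure_id <- := closed_image _ cA.
Qed.

Lemma f_inverse : exists2 g, cancel f g /\ cancel g f & continuous g.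
Proof.
have [g gK] : exists g, cancel g f.
  by exists (fun y => projT1 (cid (f_surj y))) => y; exact: projT2 (cid (f_surj y)).
have fK : cancel f g by move=> x; apply: f_inj; rewrite gK.
exists g => //; apply/continuousP => A oA.
have -> : g @^-1` A = ~` (f @` ~` A).
  rewrite predeqE => y; split => [Agy [x nAx fxy]|nfy].
    by apply: nAx; rewrite -(fK x) fxy.
  by apply/not_notP => nAgy; apply: nfy; exists (g y).
by apply: closed_openC; apply: closed_image; rewrite closedC.
Qed.

(* The inclusion from the right is dotv_f_le1 read through polars; for the
   other one, the coordinate of f^-1 along [0, f b] takes every value in [0, 1]
   by the intermediate value theorem. *)
Lemma image_segment b : f @` segment b = segment (f b).
Proof.
have [g [fK gK] gc] := f_inverse.
have sub : segment (f b) `<=` f @` segment b.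
  rewrite -!polar_halfspace (image_polar _ (K0_halfspace b)).
  by apply: polarS => _ [a ab <-]; exact: dotv_f_le1.
apply/seteqP; split => //.
have [->|b0] := eqVneq b 0; first by rewrite f0 segment0 image_set1 f0.
have bb0 : 0 < dotv b b by rewrite dotv_gt0.
move=> _ [_ [t [t01 ->]] <-].
pose tau s := dotv b (g (s *: f b)) / dotv b b.
have tauc : continuous tau.
  move=> s; apply: (@continuousM R R _ (fun=> (dotv b b)^-1)); last first.
    exact: cst_continuous.
  apply: (@continuous_comp R _ R (fun s => g (s *: f b)) (dotv b)).
    apply: (@continuous_comp R _ _ (fun s : R => s *: f b) g); last exact: gc.
    exact: scalel_continuous.
  exact: continuous_dotv.
have [s s01 taus] : exists2 s, s \in `[0, 1] & tau s = t.
  apply: IVT => //; first exact: continuous_subspaceT.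
  have g0 : g 0 = 0 by rewrite -{1}f0 fK.
  rewrite /tau scale0r scale1r g0 fK dotv0r mul0r divff ?gt_eqF //.
  by rewrite min_l ?max_r ?ler01.
have : segment (f b) (s *: f b) by exists s; split => //; move: s01; rewrite in_itv.
move/sub => [_ [u [_ ->]] fub].
move: taus; rewrite /tau -fub fK dotvZr mulfK ?gt_eqF // => ut.
by exists s; split; [move: s01; rewrite in_itv | rewrite -ut fub].
Qed.

Lemma image_halfspace b : f @` halfspace b = halfspace (f b).
Proof. by rewrite -!polar_segment (image_polar _ (K0_segment b)) image_segment. Qed.

Lemma dotv_f_le1E a b : (dotv (f b) (f a) <= 1) = (dotv b a <= 1).
Proof.
apply/idP/idP => [fba|/dotv_f_le1 //]; have : halfspace (f b) (f a) := fba.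
by rewrite -image_halfspace => -[a' ba' /f_inj <-].
Qed.

Lemma segment_fE b x : segment (f b) (f x) <-> segment b x.
Proof. by rewrite -image_segment; split => [[y yb /f_inj <-]|bx] //; exists x. Qed.

Lemma f_ray b t : 0 <= t -> exists2 mu, 0 <= mu & f (t *: b) = mu *: f b.
Proof.
move=> t0; have [t1|t1] := leP t 1.
  have /segment_fE[mu [/andP[mu0 _] ->]] : segment b (t *: b).
    by exists t; rewrite t0 t1.
  by exists mu.
have [->|b0] := eqVneq b 0; first by exists 0; rewrite // !scaler0 f0 scaler0.
have fb0 : f b != 0 by rewrite -f0 (inj_eq f_inj).
by have /segment_fE/(segment_ray _ _ fb0) := segment_scale_inv b _ (ltW t1).
Qed.

Lemma ray_f b s : 0 <= s -> exists2 t, 0 <= t & f (t *: b) = s *: f b.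
Proof.
move=> s0; have [->|b0] := eqVneq b 0.
  by exists 0; rewrite // !scaler0 f0 scaler0.
have [s1|s1] := leP s 1.
  have : (f @` segment b) (s *: f b) by rewrite image_segment; exists s; rewrite s0 s1.
  by case=> _ [t [/andP[t0 _] ->]] <-; exists t.
have [z fz] := f_surj (s *: f b).
have := segment_scale_inv (f b) _ (ltW s1).
by rewrite -fz => /segment_fE/(segment_ray _ _ b0)[t t0 zE]; exists t; rewrite -?zE.
Qed.

Lemma f_opp_scale b k : b != 0 -> f (- b) = k *: f b -> k < 0.
Proof.
move=> b0 fk; rewrite ltNge; apply/negP => k0.
have [t t0] := ray_f b _ k0; rewrite -fk => /f_inj /eqP.
rewrite -subr_eq0 opprK -{2}(scale1r b) -scalerDl scaler_eq0 (negbTE b0) orbF.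
by move=> /eqP; lra.
Qed.

Lemma dotv_f_perp_le0 b x : dotv b x = 0 -> dotv (f b) (f x) <= 0.
Proof.
move=> bx; rewrite leNgt; apply/negP => d0.
have [t t0 ft] := ray_f b _ (divr_ge0 (ler0n _ 2) (ltW d0)).
have := dotv_f_le1 x (t *: b); rewrite dotvZl bx mulr0 ler01 ft dotvZl.
by rewrite mulfVK ?gt_eqF // lern1 => /(_ isT).
Qed.

(* The preimage z of f b + f (-b) satisfies <w, z> <= 1 for all w in b^perp,
   so z lies on the line through b; writing f z as a nonnegative multiple of
   f b or of f (-b), f_opp_scale leaves only a negative multiple. *)
Lemma f_opp b : b != 0 -> exists2 k, k < 0 & f (- b) = k *: f b.
Proof.
move=> b0; have [z fz] := f_surj (f b + f (- b)).
have zE : z = (dotv b z / dotv b b) *: b.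
  apply: perp_proj => w bw; rewrite -dotv_f_le1E fz dotvDr !(dotvC (f w)).
  have := dotv_f_perp_le0 b w bw.
  have := dotv_f_perp_le0 (- b) w; rewrite dotvNl bw oppr0 => /(_ erefl).
  lra.
move: zE; set t := _ / _ => zE; have [t0|t0] := leP 0 t.
  have [mu mu0 fmu] := f_ray b _ t0.
  have E : f (- b) = (mu - 1) *: f b.
    by rewrite scalerBl scale1r -fmu -zE fz (addrC (f b)) addrK.
  by exists (mu - 1) => //; exact: f_opp_scale b0 E.
have mt0 : 0 <= - t by rewrite oppr_ge0 ltW.
have [mu mu0 fmu] := f_ray (- b) _ mt0.
have E : f b = (mu - 1) *: f (- b).
  by rewrite scalerBl scale1r -fmu scaleNr scalerN opprK -zE fz addrK.
have k0 : mu - 1 < 0.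
  by apply: (f_opp_scale (- b)); rewrite ?oppr_eq0 // opprK.
by exists (mu - 1)^-1; rewrite ?invr_lt0 // E scalerA mulVf ?lt_eqF // scale1r.
Qed.

Lemma dotv_f_perp b x : dotv b x = 0 -> dotv (f b) (f x) = 0.
Proof.
move=> bx; have [->|b0] := eqVneq b 0; first by rewrite f0 dotv0l.
have [k k0 fk] := f_opp _ b0.
apply/eqP; rewrite eq_le dotv_f_perp_le0 //=.
have := dotv_f_perp_le0 (- b) x; rewrite dotvNl bx oppr0 fk dotvZl => /(_ erefl).
by rewrite nmulr_rle0.
Qed.

(* For s > 1 we have <a, s x> > 1, hence <f a, f (s x)> > 1; let s -> 1+. *)
Lemma dotv_f_eq1 a x : dotv a x = 1 -> dotv (f a) (f x) = 1.
Proof.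
move=> ax; apply/eqP; rewrite eq_le dotv_f_le1 ?ax ?lexx //=.
pose phi s := dotv (f a) (f (s *: x)).
have phic : continuous phi.
  move=> s; apply: continuous_comp (continuous_dotv _ _).
  by apply: continuous_comp (f_cont _); exact: scalel_continuous.
have : 1 <= phi 1.
  apply: (cvgr_to_ge (cvg_at_right_filter (phic 1))); near=> s.
  apply/ltW; rewrite ltNge dotv_f_le1E dotvZr ax mulr1 -ltNge.
  by near: s; exact: nbhs_right_gt.
by rewrite /phi scale1r.
Unshelve. all: by end_near.
Qed.

Lemma dotv_f_basis j k :
  dotv (f (delta_mx ord0 j)) (f (delta_mx ord0 k)) = (j == k)%:R.
Proof.
have [<-|jk] := eqVneq j k; first by apply: dotv_f_eq1; rewrite dotv_delta mxE !eqxx.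
by apply: dotv_f_perp; rewrite dotv_delta mxE eqxx (negbTE jk).
Qed.

Definition axis_profile k t := dotv (f (t *: delta_mx ord0 k)) (f (delta_mx ord0 k)).

Lemma axis_profile0 k : axis_profile k 0 = 0.
Proof. by rewrite /axis_profile scale0r f0 dotv0l. Qed.

Lemma axis_profile1 k : axis_profile k 1 = 1.
Proof. by rewrite /axis_profile scale1r dotv_f_basis eqxx. Qed.

Lemma f_axis k t : f (t *: delta_mx ord0 k) = axis_profile k t *: f (delta_mx ord0 k).
Proof.
rewrite {1}(orthonormal_expand _ dotv_f_basis (f _)) (bigD1 k) //=.
rewrite big1 ?addr0 // => j jk.
by rewrite dotv_f_perp ?scale0r // dotvZl dotv_delta mxE eqxx eq_sym (negbTE jk) mulr0.
Qed.

Lemma dotv_f_axis x k : dotv (f x) (f (delta_mx ord0 k)) = axis_profile k (x ord0 k).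
Proof.
set c := x ord0 k; have [c0|c0] := eqVneq c 0.
  by rewrite c0 axis_profile0 dotvC dotv_f_perp // dotv_delta.
have E1 : axis_profile k c^-1 * dotv (f x) (f (delta_mx ord0 k)) = 1.
  rewrite -dotvZr -f_axis; apply: dotv_f_eq1.
  by rewrite dotvZr dotvC dotv_delta mulVf.
have E2 : axis_profile k c^-1 * axis_profile k c = 1.
  have ce : dotv (c *: delta_mx ord0 k) (c^-1 *: delta_mx ord0 k) = 1.
    by rewrite dotvZl dotvZr dotv_delta mxE !eqxx mulr1 mulfV.
  have := dotv_f_eq1 _ _ ce; rewrite !f_axis dotvZl dotvZr dotv_f_basis eqxx.
  by rewrite mulr1 mulrC.
have h0 : axis_profile k c^-1 != 0.
  by apply/eqP => h0; move: E2; rewrite h0 mul0r => /eqP; rewrite eq_sym oner_eq0.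
by apply: (mulfI h0); rewrite E1 E2.
Qed.

Lemma f_axis_expand x : f x = \sum_k axis_profile k (x ord0 k) *: f (delta_mx ord0 k).
Proof.
rewrite {1}(orthonormal_expand _ dotv_f_basis (f x)).
by apply: eq_bigr => k _; rewrite dotv_f_axis.
Qed.

Lemma dotv_f_expand x y :
  dotv (f x) (f y) = \sum_k axis_profile k (x ord0 k) * axis_profile k (y ord0 k).
Proof.
rewrite [f y]f_axis_expand dotv_sumr; apply: eq_bigr => k _.
by rewrite dotvZr dotv_f_axis mulrC.
Qed.

Lemma axis_profile_cross i j : i != j -> cross_eq (axis_profile i) (axis_profile j).
Proof.
move=> ij a b t abt; have ji : j != i by rewrite eq_sym.
pose e k : 'rV[R]_n := delta_mx ord0 k.
have := @dotv_f_eq1 (e i + t *: e j) (a *: e i + b *: e j).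
rewrite dotv_f_expand (bigD1 i) // (bigD1 j) //= big1 ?addr0 => [|k /andP[ki kj]].
  rewrite !mxE /= !eqxx (negbTE ij) (negbTE ji) !(mulr0, mulr1, addr0, add0r).
  rewrite axis_profile1 mul1r; apply.
  rewrite !(dotvDl, dotvDr, dotvZl, dotvZr) !dotv_delta !mxE /= !eqxx.
  by rewrite (negbTE ij) (negbTE ji) !(mulr0, mulr1, addr0, add0r).
by rewrite !mxE /= (negbTE ki) (negbTE kj) !mulr0 addr0 axis_profile0 mul0r.
Qed.

Lemma axis_profile_pair i j : i != j -> cross_pair (axis_profile i) (axis_profile j).
Proof.
move=> ij; split; rewrite ?axis_profile1 //; apply: axis_profile_cross => //.
by rewrite eq_sym.
Qed.

End PolarPreservingMap.

Theorem proposition5p4 (R : realType) (n : nat) (f : 'rV[R]_n -> 'rV[R]_n) :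
  (2 <= n)%N ->
  continuous f ->
  injective f ->
  (forall A : set 'rV[R]_n, K0 A ->
     closure (f @` polar A) = polar (closure (f @` A))) ->
  orthogonal_linear f.
Proof.
move=> n2 f_cont f_inj f_polar.
have profile_id k : axis_profile f k =1 id.
  have [j kj] : exists j : 'I_n, k != j.
    have [k0|k0] := eqVneq (val k) 0; last by exists (Ordinal (ltnW n2)).
    by exists (Ordinal n2); apply/eqP => /(congr1 val); rewrite /= k0.
  exact: cross_pair_id (axis_profile_pair f f_cont f_inj f_polar _ _ kj).
exists (\matrix_k f (delta_mx ord0 k)); split.
  exact: orthonormal_mx (dotv_f_basis f f_cont f_inj f_polar).
move=> x; rewrite (f_axis_expand f f_cont f_inj f_polar) mulmx_sum_row.
by apply: eq_bigr => k _; rewrite rowK profile_id.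
Qed.
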